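(* Let $\mathcal M=(W,W_\bot,\preccurlyeq,\sqsubseteq,V)$ be a bi-intuitionistic model, $\Sigma$ a set of formulas, and $\sim$ a $\Sigma$-bisimulation on $\mathcal M$ which is also an equivalence relation. Then: (1) if $\sqsubseteq$ is forward confluent in $\mathcal M$, then $\sqsubseteq/{\sim}$ is forward confluent in $\mathcal M/{\sim}$; (2) if $\sqsubseteq$ is backward confluent in $\mathcal M$, then $\sqsubseteq/{\sim}$ is backward confluent in $\mathcal M/{\sim}$; (3) if $\mathcal M$ is locally linear, so is $\mathcal M/{\sim}$.
   Context: Formulas: $p\mid\bot\mid\varphi\wedge\psi\mid\varphi\vee\psi\mid\varphi\to\psi\mid\Diamond\varphi\mid\Box\varphi$ over a countably infinite set $\mathbb P$. A bi-intuitionistic model $(W,W_\bot,\preccurlyeq,\sqsubseteq,V)$: $\preccurlyeq,\sqsubseteq$ preorders on $W$, $W_\bot$ upward closed under both, $V:\mathbb P\to2^W$ with $V(p)$ $\preccurlyeq$-upward closed and $\supseteq W_\bot$. Satisfaction: $p$ iff $w\in V(p)$; $\bot$ iff $w\in W_\bot$; $\wedge,\vee$ pointwise; $w\models\varphi\to\psi$ iff for all $v\succcurlyeq w$, $v\models\varphi$ implies $v\models\psi$; $w\models\Diamond\varphi$ iff for all $u\succcurlyeq w$ there is $v\sqsupseteq u$ with $v\models\varphi$; $w\models\Box\varphi$ iff $v\models\varphi$ whenever $w\preccurlyeq u\sqsubseteq v$. For $R\subseteq W\times W$ (relative to $\preccurlyeq$): forward confluent if $w\preccurlyeq w'$, $wRv$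 imply some $v'$ with $v\preccurlyeq v'$, $w'Rv'$; backward confluent if $wRv\preccurlyeq v'$ implies some $w'$ with $w\preccurlyeq w'Rv'$. Locally linear: $w\preccurlyeq u$, $w\preccurlyeq v$ imply $u\preccurlyeq v$ or $v\preccurlyeq u$. The $\Sigma$-label of $w$ is $\ell(w)=(\ell^+(w);\ell^\Diamond(w))$ with $\ell^+(w)=\{\varphi\in\Sigma:(\mathcal M,w)\models\varphi\}$ and $\ell^\Diamond(w)=\{\varphi\in\Sigma:\forall v\sqsupseteq w,\ (\mathcal M,v)\not\models\varphi\}$. A $\Sigma$-bisimulation is a relation $Z\subseteq W\times W$ that is forward and backward confluent (relative to $\preccurlyeq$) and such that $wZv$ implies $\ell(w)=\ell(v)$. For an equivalence relation $\sim$ on $W$ with classes $[w]$, the quotient $\mathcal M/{\sim}=(W/{\sim},W_\bot/{\sim},\preccurlyeq/{\sim},\sqsubseteq/{\sim},V/{\sim})$ has $W/{\sim}=\{[w]:w\in W\}$, $W_\bot/{\sim}=\{[w]:w\in W_\bot\}$, $[w]\,(\preccurlyeq/{\sim})\,[v]$ iff there are $w'\sim w$, $v'\sim v$ with $w'\preccurlyeq v'$; $\sqsubseteq/{\sim}$ is the transitive closure of the relation $\sqsubseteq^0/{\sim}$ given by $[w]\,(\sqsubseteq^0/{\sim})\,[v]$ iff there are $w',v'$ with $w\sim w'\sqsubseteq v'\sim v$; and $[w]\in (V/{\sim})(p)$ iff some $w'\sim w$ lies in $V(p)$. *)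

From Stdlib Require Import Relations.



Inductive formula : Type :=
| Var : nat -> formula
| Bot : formula
| And : formula -> formula -> formula
| Or : formula -> formula -> formula
| Imp : formula -> formula -> formula
| Dia : formula -> formula
| Box : formula -> formula.

Definition preorder_on {X : Type} (R : X -> X -> Prop) : Prop :=
  (forall x, R x x) /\ (forall x y z, R x y -> R y z -> R x z).

Definition up_closed {X : Type} (R : X -> X -> Prop) (A : X -> Prop) : Prop :=
  forall x y, A x -> R x y -> A y.

Record bimodel : Type := {
  W : Type;
  Wbot : W -> Prop;
  le : W -> W -> Prop;
  sq : W -> W -> Prop;
  V : nat -> W -> Prop;
  le_preorder : preorder_on le;
  sq_preorder : preorder_on sq;
  Wbot_up_le : up_closed le Wbot;
  Wbot_up_sq : up_closed sq Wbot;
  V_up : forall p, up_closed le (V p);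
  V_bot : forall p w, Wbot w -> V p w
}.

Fixpoint sat (M : bimodel) (w : W M) (phi : formula) : Prop :=
  match phi with
  | Var p => V M p w
  | Bot => Wbot M w
  | And a b => sat M w a /\ sat M w b
  | Or a b => sat M w a \/ sat M w b
  | Imp a b => forall v, le M w v -> sat M v a -> sat M v b
  | Dia a => forall u, le M w u -> exists v, sq M u v /\ sat M v a
  | Box a => forall u v, le M w u -> sq M u v -> sat M v a
  end.

Definition forward_confluent {X : Type} (le R : X -> X -> Prop) : Prop :=
  forall w w' v, le w w' -> R w v -> exists v', le v v' /\ R w' v'.

Definition backward_confluent {X : Type} (le R : X -> X -> Prop) : Prop :=
  forall w v v', R w v -> le v v' -> exists w', le w w' /\ R w' v'.

Definition locally_linear {X : Type} (le : X -> X -> Prop) : Prop :=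
  forall w u v, le w u -> le w v -> le u v \/ le v u.

Definition label_plus (M : bimodel) (Sigma : formula -> Prop) (w : W M) : formula -> Prop :=
  fun phi => Sigma phi /\ sat M w phi.

Definition label_dia (M : bimodel) (Sigma : formula -> Prop) (w : W M) : formula -> Prop :=
  fun phi => Sigma phi /\ forall v, sq M w v -> ~ sat M v phi.

Definition same_label (M : bimodel) (Sigma : formula -> Prop) (w v : W M) : Prop :=
  (forall phi, label_plus M Sigma w phi <-> label_plus M Sigma v phi) /\
  (forall phi, label_dia M Sigma w phi <-> label_dia M Sigma v phi).

Definition bisimulation (M : bimodel) (Sigma : formula -> Prop) (Z : W M -> W M -> Prop) : Prop :=
  forward_confluent (le M) Z /\ backward_confluent (le M) Z /\
  (forall w v, Z w v -> same_label M Sigma w v).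

Definition equivalence_rel {X : Type} (R : X -> X -> Prop) : Prop :=
  (forall x, R x x) /\ (forall x y, R x y -> R y x) /\
  (forall x y z, R x y -> R y z -> R x z).

Definition eq_class {X : Type} (sim : X -> X -> Prop) (w : X) : X -> Prop :=
  fun v => sim w v.

Definition quot {X : Type} (sim : X -> X -> Prop) : Type :=
  { C : X -> Prop | exists w, C = eq_class sim w }.

Definition cls {X : Type} (sim : X -> X -> Prop) (C : quot sim) : X -> Prop :=
  proj1_sig C.

Definition quot_le (M : bimodel) (sim : W M -> W M -> Prop) (C D : quot sim) : Prop :=
  exists w' v', cls sim C w' /\ cls sim D v' /\ le M w' v'.

Definition quot_sq0 (M : bimodel) (sim : W M -> W M -> Prop) (C D : quot sim) : Prop :=
  exists w' v', cls sim C w' /\ cls sim D v' /\ sq M w' v'.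

Definition quot_sq (M : bimodel) (sim : W M -> W M -> Prop) : quot sim -> quot sim -> Prop :=
  clos_trans (quot sim) (quot_sq0 M sim).

(* Only one property of the Sigma-bisimulation ~ is used: it is an equivalence
   relation that is forward confluent with respect to the intuitionistic order.
   The development therefore works over an arbitrary type X with relations
   le, R and an equivalence sim.
   - [lift R] is the relation induced by R on classes ([C] lift R [D] iff some
     members are R-related); both le/~ and sq0/~ are of this form.
   - The key lemma [lift_le_from_member]: forward confluence of sim makes lift le
     independent of representatives: if C lift-le D, every member of C is
     le-below some member of D.
   - From it, forward/backward confluence of R lift to lift R, and local
     linearity of le lifts to lift le.
   - Forward/backward confluence pass to transitive closures, which yields the
     statement for sq/~, the transitive closure of sq0/~. *)

From Stdlib Require Import Relations.

Lemma clos_trans_forward_confluent {X : Type} (L R : X -> X -> Prop) :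
  forward_confluent L R -> forward_confluent L (clos_trans X R).
Proof.
  intros HR w w' v Hww' Hwv. revert w' Hww'.
  induction Hwv as [w v Hstep | w u v _ IHwu _ IHuv]; intros w' Hww'.
  - destruct (HR _ _ _ Hww' Hstep) as [v' [Hvv' Hw'v']].
    exists v'. split; [exact Hvv' | now apply t_step].
  - destruct (IHwu _ Hww') as [u' [Huu' Hw'u']].
    destruct (IHuv _ Huu') as [v' [Hvv' Hu'v']].
    exists v'. split; [exact Hvv' | eapply t_trans; eassumption].
Qed.

Lemma clos_trans_backward_confluent {X : Type} (L R : X -> X -> Prop) :
  backward_confluent L R -> backward_confluent L (clos_trans X R).
Proof.
  intros HR w v v' Hwv. revert v'.
  induction Hwv as [w v Hstep | w u v _ IHwu _ IHuv]; intros v' Hvv'.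
  - destruct (HR _ _ _ Hstep Hvv') as [w' [Hww' Hw'v']].
    exists w'. split; [exact Hww' | now apply t_step].
  - destruct (IHuv _ Hvv') as [u' [Huu' Hu'v']].
    destruct (IHwu _ Huu') as [w' [Hww' Hw'u']].
    exists w'. split; [exact Hww' | eapply t_trans; eassumption].
Qed.

Section Quotient.

Variable X : Type.
Variable sim : X -> X -> Prop.
Hypothesis sim_equiv : equivalence_rel sim.

Definition lift (R : X -> X -> Prop) (C D : quot sim) : Prop :=
  exists w v, cls sim C w /\ cls sim D v /\ R w v.

Definition class_of (v : X) : quot sim :=
  exist _ (eq_class sim v) (ex_intro _ v eq_refl).

Lemma class_of_member (v : X) : cls sim (class_of v) v.
Proof. destruct sim_equiv as [refl _]. exact (refl v). Qed.

Lemma cls_members_sim (C : quot sim) (x y : X) :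
  cls sim C x -> cls sim C y -> sim x y.
Proof.
  destruct C as [C [c ->]]; unfold cls, eq_class; simpl.
  destruct sim_equiv as [_ [symm trans]]. eauto.
Qed.

Lemma cls_closed (C : quot sim) (x y : X) :
  cls sim C x -> sim x y -> cls sim C y.
Proof.
  destruct C as [C [c ->]]; unfold cls, eq_class; simpl.
  destruct sim_equiv as [_ [_ trans]]. eauto.
Qed.

Variable le : X -> X -> Prop.
Hypothesis sim_forward : forward_confluent le sim.

Lemma lift_le_from_member (C D : quot sim) (w : X) :
  lift le C D -> cls sim C w -> exists v, le w v /\ cls sim D v.
Proof.
  intros [a [b [Ha [Hb Hab]]]] Hw.
  destruct (sim_forward _ _ _ Hab (cls_members_sim C a w Ha Hw))
    as [v [Hwv Hbv]].
  exists v. split; [exact Hwv | exact (cls_closed D b v Hb Hbv)].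
Qed.

Lemma lift_forward_confluent (R : X -> X -> Prop) :
  forward_confluent le R -> forward_confluent (lift le) (lift R).
Proof.
  intros HR C C' D HCC' [w [v [Hw [Hv Hwv]]]].
  destruct (lift_le_from_member C C' w HCC' Hw) as [w' [Hww' Hw']].
  destruct (HR _ _ _ Hww' Hwv) as [v' [Hvv' Hw'v']].
  exists (class_of v'). split.
  - exists v, v'. auto using class_of_member.
  - exists w', v'. auto using class_of_member.
Qed.

Lemma lift_backward_confluent (R : X -> X -> Prop) :
  backward_confluent le R -> backward_confluent (lift le) (lift R).
Proof.
  intros HR C D D' [w [v [Hw [Hv Hwv]]]] HDD'.
  destruct (lift_le_from_member D D' v HDD' Hv) as [v' [Hvv' Hv']].
  destruct (HR _ _ _ Hwv Hvv') as [w' [Hww' Hw'v']].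
  exists (class_of w'). split.
  - exists w, w'. auto using class_of_member.
  - exists w', v'. auto using class_of_member.
Qed.

Lemma lift_locally_linear :
  locally_linear le -> locally_linear (lift le).
Proof.
  intros Hlin C U V' [a [u [Ha [Hu Hau]]]] HCV.
  destruct (lift_le_from_member C V' a HCV Ha) as [v [Hav Hv]].
  destruct (Hlin _ _ _ Hau Hav) as [Huv | Hvu].
  - left. exists u, v. auto.
  - right. exists v, u. auto.
Qed.

End Quotient.

Theorem mainTheorem10 (M : bimodel) (Sigma : formula -> Prop)
  (sim : W M -> W M -> Prop) :
  bisimulation M Sigma sim -> equivalence_rel sim ->
  (forward_confluent (le M) (sq M) ->
     forward_confluent (quot_le M sim) (quot_sq M sim)) /\
  (backward_confluent (le M) (sq M) ->
     backward_confluent (quot_le M sim) (quot_sq M sim)) /\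
  (locally_linear (le M) -> locally_linear (quot_le M sim)).
Proof.
  (* le/~ and sq0/~ are, by definition, the lifts of le and sq. *)
  intros [sim_forward _] sim_equiv. split; [|split].
  - intros Hsq. apply clos_trans_forward_confluent.
    exact (lift_forward_confluent _ sim sim_equiv _ sim_forward _ Hsq).
  - intros Hsq. apply clos_trans_backward_confluent.
    exact (lift_backward_confluent _ sim sim_equiv _ sim_forward _ Hsq).
  - exact (lift_locally_linear _ sim sim_equiv _ sim_forward).
Qed.
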